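(* Let $I=\langle Q,D,\tau_{in},\tau_{out}\rangle$ be an instance of DTP, let $C_I$ be its critical domain, $U_I$ its critical update and $Q_I'$ its critical query (as defined in the context). Then DTP holds for $I$ if and only if for every tuple $\vec o$ over $C_I$, $\vec o\in Q_I'(D\cup U_I,\tau_{out})$ implies $\vec o\in Q_I'(D,\tau_{out})$.
   Context: Temporal Datalog. Constants are partitioned into objects and integer time points; variables into object variables and time variables. A time term is a time point, a time variable, or an expression $t+k$ with $t$ a time variable and $k\in\mathbb{Z}$. Each predicate is either extensional (EDB) or intensional (IDB) and has an arity $n\ge0$, each position being of object sort or time sort; a predicate is rigid if all its positions are of object sort, and temporal if its last position is of time sort and all others are of object sort. An atom $P(t_1,\dots,t_n)$ has terms of the required sorts. A rule is $\bigwedge_i\alpha_i\to\alpha$ with $\alpha$ and all $\alpha_i$ rigid or temporal atoms, $\alpha$ IDB whenever the body is nonempty, and every head variable occurring in the body. A program is a finite set of rules. A fact is a ground rigid or temporal atom without $+$ (identified with the rule $\top\to\alpha$); a dataset is a finite set of EDB facts. Rules are read as universally quantified first-order sentences with $+$ interpreted as integer addition; $\Pi\models\alpha$ denotes entailment. A query is $Q=\langle P_Q,\Pi_Q\rangle$ with $\Pi_Q$ a program and $P_Q$ an IDB predicate of $\Pi_Q$; it is temporal if $P_Q$ is temporal. For a temporal query $Q$, dataset $D$ and time point $\tau$, $Q(D,\tau)$ is the set of tuples of objects $\vec o$ with $\Pi_Q\cup D\models P_Q(\vec o,\tau)$. A $\tau_{in}$-history is a dataset consisting of rigid facts and temporal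 facts with time argument $\le\tau_{in}$; a $\tau_{in}$-update is a dataset consisting of temporal facts with time argument $>\tau_{in}$. Definitive Time Point (DTP): an instance is $\langle Q,D,\tau_{in},\tau_{out}\rangle$ with $Q$ a temporal query, $D$ a $\tau_{in}$-history and $\tau_{out}\le\tau_{in}$; DTP holds for it iff $Q(D,\tau_{out})=Q(D\cup U,\tau_{out})$ for every $\tau_{in}$-update $U$. Critical domain: $C_I$ is the set of all objects occurring in $\Pi_Q\cup D$ together with one fresh object $o_I$. Let $\psi$ be the renaming that maps each temporal EDB predicate to a fresh temporal IDB predicate of the same arity. Critical update: with $A$ a fresh unary temporal EDB predicate, $U_I$ is the $\tau_{in}$-update containing $A(\tau_{in}+1)$ and all facts $P(\vec o,\tau_{in}+1)$ for each temporal EDB predicate $P$ of $\Pi_Q$ and each tuple $\vec o$ over $C_I$. Critical query: with $V$ a fresh unary temporal IDB predicate, $Q_I'=\langle P_Q,\Pi'\rangle$ where $\Pi'$ consists of $\psi(\Pi_Q)$ together with the rules $A(t)\to V(t)$, $V(t)\to V(t+1)$, and, for each temporal EDB predicate $P$ of $\Pi_Q$ with $P'=\psi(P)$, the rules $P(\vec x,t)\to P'(\vec x,t)$ and $V(t+1)\wedge P'(\vec x,t)\to P'(\vec x,t+1)$. *)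

From Stdlib Require Import ZArith List Bool Arith.
Import ListNotations.

Inductive sort := SObj | STime.

Definition is_obj_sort (s : sort) : bool :=
  match s with SObj => true | STime => false end.

(** A predicate: a name, the list of sorts of its positions (its arity is the
    length), and a flag saying whether it is intensional (IDB) or extensional
    (EDB).  Predicates are identified with the whole record. *)
Record pred := Pred { pname : nat; psig : list sort; pidb : bool }.

Definition arity (P : pred) : nat := length (psig P).

Definition is_rigid (P : pred) : bool := forallb is_obj_sort (psig P).

Definition is_temporal (P : pred) : bool :=
  match rev (psig P) with
  | STime :: r => forallb is_obj_sort r
  | _ => false
  end.

Definition is_temporal_edb (P : pred) : bool := is_temporal P && negb (pidb P).

(** Objects are constants [OConst o] (o : nat), time points are integers.
    Object variables and time variables live in separate namespaces.
    [TShift x k] is the time term [x + k]. *)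
Inductive term :=
| OConst (o : nat)
| OVar (x : nat)
| TConst (z : Z)
| TVar (x : nat)
| TShift (x : nat) (k : Z).

Definition term_sort (t : term) : sort :=
  match t with OConst _ | OVar _ => SObj | _ => STime end.

Definition term_vars (t : term) : list (sort * nat) :=
  match t with
  | OVar x => [(SObj, x)]
  | TVar x | TShift x _ => [(STime, x)]
  | _ => []
  end.

Record atom := Atom { apred : pred; aargs : list term }.

Definition atom_vars (a : atom) : list (sort * nat) := flat_map term_vars (aargs a).

Definition atom_wf (a : atom) : Prop :=
  map term_sort (aargs a) = psig (apred a) /\
  (is_rigid (apred a) || is_temporal (apred a)) = true.

Record rule := Rule { rbody : list atom; rhead : atom }.

Definition rule_wf (r : rule) : Prop :=
  Forall atom_wf (rhead r :: rbody r) /\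
  (rbody r <> [] -> pidb (apred (rhead r)) = true) /\
  (forall v, In v (atom_vars (rhead r)) ->
     exists b, In b (rbody r) /\ In v (atom_vars b)).

Definition program := list rule.

Definition program_wf (Pi : program) : Prop := Forall rule_wf Pi.

Definition prog_preds (Pi : program) : list pred :=
  flat_map (fun r => map apred (rhead r :: rbody r)) Pi.

Definition is_const_term (t : term) : Prop :=
  match t with OConst _ | TConst _ => True | _ => False end.

Definition is_fact (a : atom) : Prop := atom_wf a /\ Forall is_const_term (aargs a).

Definition dataset := list atom.

Definition is_dataset (D : dataset) : Prop :=
  Forall (fun a => is_fact a /\ pidb (apred a) = false) D.

Definition data_preds (D : dataset) : list pred := map apred D.

Definition time_arg_le (a : atom) (tau : Z) : Prop :=
  exists z, last (aargs a) (OConst 0) = TConst z /\ (z <= tau)%Z.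
Definition time_arg_gt (a : atom) (tau : Z) : Prop :=
  exists z, last (aargs a) (OConst 0) = TConst z /\ (tau < z)%Z.

Definition is_history (tin : Z) (D : dataset) : Prop :=
  is_dataset D /\
  forall f, In f D ->
    is_rigid (apred f) = true \/
    (is_temporal (apred f) = true /\ time_arg_le f tin).

Definition is_update (tin : Z) (U : dataset) : Prop :=
  is_dataset U /\
  forall f, In f U -> is_temporal (apred f) = true /\ time_arg_gt f tin.

(** * First-order semantics (time sort interpreted as Z with +) *)

Record interp := Interp {
  dom : Type;
  cst : nat -> dom;
  rel : pred -> list (dom + Z) -> Prop }.

Definition eval_term (M : interp) (ov : nat -> dom M) (tv : nat -> Z) (t : term)
  : dom M + Z :=
  match t with
  | OConst o => inl (cst M o)
  | OVar x => inl (ov x)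
  | TConst z => inr z
  | TVar x => inr (tv x)
  | TShift x k => inr (tv x + k)%Z
  end.

Definition holds (M : interp) (ov : nat -> dom M) (tv : nat -> Z) (a : atom) : Prop :=
  rel M (apred a) (map (eval_term M ov tv) (aargs a)).

Definition sat_rule (M : interp) (r : rule) : Prop :=
  forall ov tv, (forall b, In b (rbody r) -> holds M ov tv b) -> holds M ov tv (rhead r).

(** [Pi ∪ D ⊨ alpha]; facts are identified with bodiless rules *)
Definition entails (Pi : program) (D : dataset) (alpha : atom) : Prop :=
  forall M : interp,
    (forall r, In r Pi -> sat_rule M r) ->
    (forall f, In f D -> sat_rule M (Rule [] f)) ->
    forall ov tv, holds M ov tv alpha.

Record query := Query { qpred : pred; qprog : program }.

Definition query_wf (Q : query) : Prop :=
  program_wf (qprog Q) /\ pidb (qpred Q) = true /\ In (qpred Q) (prog_preds (qprog Q)).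

Definition temporal_query (Q : query) : Prop :=
  query_wf Q /\ is_temporal (qpred Q) = true.

Definition answer (Q : query) (D : dataset) (tau : Z) (os : list nat) : Prop :=
  length os = arity (qpred Q) - 1 /\
  entails (qprog Q) D (Atom (qpred Q) (map OConst os ++ [TConst tau])).

Definition dtp_instance (Q : query) (D : dataset) (tin tout : Z) : Prop :=
  temporal_query Q /\ is_history tin D /\ (tout <= tin)%Z.

Definition dtp_holds (Q : query) (D : dataset) (tin tout : Z) : Prop :=
  forall U, is_update tin U ->
    forall os, answer Q D tout os <-> answer Q (D ++ U) tout os.

Definition obj_in_atom (o : nat) (a : atom) : Prop := In (OConst o) (aargs a).

Definition obj_in_prog (o : nat) (Pi : program) : Prop :=
  exists r, In r Pi /\ exists a, In a (rhead r :: rbody r) /\ obj_in_atom o a.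

Definition obj_in_data (o : nat) (D : dataset) : Prop :=
  exists a, In a D /\ obj_in_atom o a.

Definition in_crit_dom (Q : query) (D : dataset) (oI : nat) (o : nat) : Prop :=
  obj_in_prog o (qprog Q) \/ obj_in_data o D \/ o = oI.

Definition fresh_obj (Q : query) (D : dataset) (oI : nat) : Prop :=
  ~ obj_in_prog oI (qprog Q) /\ ~ obj_in_data oI D.

Definition tedb_preds (Pi : program) : list pred :=
  filter is_temporal_edb (prog_preds Pi).

Definition fresh_pred (Q : query) (D : dataset) (P : pred) : Prop :=
  ~ In P (prog_preds (qprog Q)) /\ ~ In P (data_preds D).

Definition critical_preds (Q : query) (D : dataset) (A V : pred) (psi : pred -> pred) : Prop :=
  (psig A = [STime] /\ pidb A = false /\ fresh_pred Q D A) /\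
  (psig V = [STime] /\ pidb V = true /\ fresh_pred Q D V) /\
  A <> V /\
  (forall P, In P (tedb_preds (qprog Q)) ->
     psig (psi P) = psig P /\ pidb (psi P) = true /\ fresh_pred Q D (psi P) /\
     psi P <> A /\ psi P <> V) /\
  (forall P1 P2, In P1 (tedb_preds (qprog Q)) -> In P2 (tedb_preds (qprog Q)) ->
     psi P1 = psi P2 -> P1 = P2).

(** the critical update U_I, characterised as a set (list up to membership) *)
Definition is_critical_update (Q : query) (D : dataset) (tin : Z) (oI : nat)
    (A : pred) (UI : dataset) : Prop :=
  forall f, In f UI <->
    f = Atom A [TConst (tin + 1)] \/
    exists P os, In P (tedb_preds (qprog Q)) /\
      length os = arity P - 1 /\ Forall (in_crit_dom Q D oI) os /\
      f = Atom P (map OConst os ++ [TConst (tin + 1)]).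

Definition ren_pred (psi : pred -> pred) (P : pred) : pred :=
  if is_temporal_edb P then psi P else P.

Definition ren_atom (psi : pred -> pred) (a : atom) : atom :=
  Atom (ren_pred psi (apred a)) (aargs a).

Definition ren_rule (psi : pred -> pred) (r : rule) : rule :=
  Rule (map (ren_atom psi) (rbody r)) (ren_atom psi (rhead r)).

(** object variables x_0 .. x_{n-1}; the time variable t is TVar 0 *)
Definition ovars (n : nat) : list term := map OVar (seq 0 n).

Definition copy_rules (V : pred) (psi : pred -> pred) (P : pred) : list rule :=
  let xs := ovars (arity P - 1) in
  [ Rule [Atom P (xs ++ [TVar 0])] (Atom (psi P) (xs ++ [TVar 0]));
    Rule [Atom V [TShift 0 1]; Atom (psi P) (xs ++ [TVar 0])]
         (Atom (psi P) (xs ++ [TShift 0 1])) ].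

Definition critical_program (Q : query) (A V : pred) (psi : pred -> pred) : program :=
  map (ren_rule psi) (qprog Q) ++
  [ Rule [Atom A [TVar 0]] (Atom V [TVar 0]);
    Rule [Atom V [TVar 0]] (Atom V [TShift 0 1]) ] ++
  flat_map (copy_rules V psi) (tedb_preds (qprog Q)).

Definition critical_query (Q : query) (A V : pred) (psi : pred -> pred) : query :=
  Query (qpred Q) (critical_program Q A V psi).

(* Ground entailment coincides with derivability in the least Herbrand model, so the proof
   works with derivations.  Every derivation of the critical program from [D] together with
   part of [U_I] unfolds into a derivation of [Q] from [D ++ U] for a genuine [tin]-update [U]
   ([psi P] and [V] record facts of [P] and time points after [tin]); hence DTP makes every
   critical answer over [D ++ U_I] an answer over [D].  Conversely, a derivation of [Q] from
   [D ++ U] is mapped into the critical program over [D ++ U_I] by sending each object outside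
   the critical domain to [oI] and each update fact [P(os, z)] to [psi P(os, z)], obtained
   from [P(os, tin + 1)] in [U_I] by copying and propagating along [V].  If critical answers
   over [D ++ U_I] are answers over [D], the collapsed tuple is then an answer of [Q] over [D];
   as [oI] occurs neither in [Pi_Q] nor in [D], the collapse did not change it. *)

From Stdlib Require Import ZArith List Lia Bool ClassicalDescription.
Import ListNotations.

(** * Least-model semantics *)

Definition ground_eval (ov : nat -> nat) (tv : nat -> Z) (t : term) : nat + Z :=
  match t with
  | OConst o => inl o
  | OVar x => inl (ov x)
  | TConst z => inr z
  | TVar x => inr (tv x)
  | TShift x k => inr (tv x + k)%Z
  end.

Inductive derives (Pi : program) (E : dataset) : pred -> list (nat + Z) -> Prop :=
| derives_fact e ov tv :
    In e E -> derives Pi E (apred e) (map (ground_eval ov tv) (aargs e))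
| derives_rule r ov tv :
    In r Pi ->
    (forall b, In b (rbody r) -> derives Pi E (apred b) (map (ground_eval ov tv) (aargs b))) ->
    derives Pi E (apred (rhead r)) (map (ground_eval ov tv) (aargs (rhead r))).

Lemma derives_fact_eq Pi E e ov tv P vals :
  In e E -> P = apred e -> vals = map (ground_eval ov tv) (aargs e) -> derives Pi E P vals.
Proof. intros; subst; apply derives_fact; auto. Qed.

Lemma derives_rule_eq Pi E r ov tv P vals :
  In r Pi ->
  (forall b, In b (rbody r) -> derives Pi E (apred b) (map (ground_eval ov tv) (aargs b))) ->
  P = apred (rhead r) -> vals = map (ground_eval ov tv) (aargs (rhead r)) ->
  derives Pi E P vals.
Proof. intros; subst; apply derives_rule; auto. Qed.

Lemma derives_mono Pi E E' P vals :
  incl E E' -> derives Pi E P vals -> derives Pi E' P vals.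
Proof. intros HE H; induction H; [apply derives_fact | apply derives_rule]; auto. Qed.

Definition herbrand (Pi : program) (E : dataset) : interp :=
  Interp nat (fun o => o) (derives Pi E).

Definition lift_val (M : interp) (v : nat + Z) : dom M + Z :=
  match v with inl o => inl (cst M o) | inr z => inr z end.

Lemma eval_term_lift M ov tv t :
  eval_term M (fun x => cst M (ov x)) tv t = lift_val M (ground_eval ov tv t).
Proof. destruct t; reflexivity. Qed.

Lemma holds_lift M ov tv a :
  holds M (fun x => cst M (ov x)) tv a <->
  rel M (apred a) (map (lift_val M) (map (ground_eval ov tv) (aargs a))).
Proof.
  unfold holds. rewrite map_map, (map_ext _ _ (eval_term_lift M ov tv)). reflexivity.
Qed.

Lemma derives_sound Pi E P vals M :
  (forall r, In r Pi -> sat_rule M r) -> (forall f, In f E -> sat_rule M (Rule [] f)) ->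
  derives Pi E P vals -> rel M P (map (lift_val M) vals).
Proof.
  intros HPi HE H; induction H as [e ov tv He | r ov tv Hr _ IH].
  - apply holds_lift, HE; [exact He | intros _ []].
  - apply holds_lift, HPi; [exact Hr|]. intros b Hb. apply holds_lift, IH, Hb.
Qed.

Lemma ground_eval_const ov tv os z :
  map (ground_eval ov tv) (map OConst os ++ [TConst z]) = map inl os ++ [inr z].
Proof. rewrite map_app, map_map. reflexivity. Qed.

Lemma holds_herbrand Pi E ov tv a :
  holds (herbrand Pi E) ov tv a <-> derives Pi E (apred a) (map (ground_eval ov tv) (aargs a)).
Proof.
  unfold holds. rewrite (map_ext _ (ground_eval ov tv)) by (intros []; reflexivity).
  reflexivity.
Qed.

Lemma entails_iff_derives Pi E P os z :
  entails Pi E (Atom P (map OConst os ++ [TConst z])) <->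
  derives Pi E P (map inl os ++ [inr z]).
Proof.
  split.
  - intro H.
    assert (Hmodel : holds (herbrand Pi E) (fun _ => 0) (fun _ => 0%Z)
                       (Atom P (map OConst os ++ [TConst z]))).
    { apply H.
      - intros r Hr ov tv Hb. apply holds_herbrand, derives_rule; [exact Hr|].
        intros b Hbr. apply holds_herbrand, Hb, Hbr.
      - intros f Hf ov tv _. apply holds_herbrand, derives_fact, Hf. }
    apply holds_herbrand in Hmodel. simpl in Hmodel.
    rewrite ground_eval_const in Hmodel. exact Hmodel.
  - intros H M HPi HE ov tv. unfold holds. simpl.
    pose proof (derives_sound _ _ _ _ M HPi HE H) as HM.
    rewrite map_app, map_map in HM |- *. exact HM.
Qed.

Lemma answer_iff_derives Q E tau os :
  answer Q E tau os <->
  length os = arity (qpred Q) - 1 /\ derives (qprog Q) E (qpred Q) (map inl os ++ [inr tau]).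
Proof. unfold answer. rewrite entails_iff_derives. reflexivity. Qed.

Lemma forallb_obj_sort l : forallb is_obj_sort l = true -> l = repeat SObj (length l).
Proof.
  induction l as [|[] l IH]; simpl; intro H; try discriminate; [reflexivity|].
  f_equal; auto.
Qed.

Lemma psig_temporal P :
  is_temporal P = true -> psig P = repeat SObj (arity P - 1) ++ [STime].
Proof.
  unfold is_temporal, arity. destruct (rev (psig P)) as [|[] l] eqn:Hrev; try discriminate.
  intro Hobj.
  assert (Hsig : psig P = rev l ++ [STime]).
  { rewrite <- (rev_involutive (psig P)), Hrev. reflexivity. }
  rewrite Hsig, length_app, length_rev, Nat.add_sub.
  rewrite (forallb_obj_sort _ Hobj) at 1. rewrite rev_repeat. reflexivity.
Qed.

Lemma ground_temporal_args n args :
  Forall is_const_term args -> map term_sort args = repeat SObj n ++ [STime] ->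
  exists os z, args = map OConst os ++ [TConst z] /\ length os = n.
Proof.
  revert args; induction n as [|n IH]; intros [|t args] Hc Hs; inversion Hs as [[Ht Hs']];
    inversion Hc as [|? ? Htc Hc']; subst; destruct t; try discriminate; try contradiction.
  - destruct args; [|discriminate]. exists [], z. auto.
  - destruct (IH args Hc' Hs') as (os & z & -> & Hl). exists (o :: os), z. simpl; auto.
Qed.

Lemma temporal_fact_shape e :
  is_fact e -> is_temporal (apred e) = true ->
  exists os z, aargs e = map OConst os ++ [TConst z] /\ length os = arity (apred e) - 1.
Proof.
  intros [[Hs _] Hc] Ht. apply ground_temporal_args; [exact Hc|].
  rewrite Hs. apply psig_temporal, Ht.
Qed.

Lemma tedb_predsP Pi P :
  In P (tedb_preds Pi) <->
  In P (prog_preds Pi) /\ is_temporal P = true /\ pidb P = false.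
Proof.
  unfold tedb_preds, is_temporal_edb. rewrite filter_In, andb_true_iff, negb_true_iff.
  reflexivity.
Qed.

Lemma prog_preds_head Pi r : In r Pi -> In (apred (rhead r)) (prog_preds Pi).
Proof. intro Hr. apply in_flat_map. exists r. simpl; auto. Qed.

Lemma prog_preds_body Pi r b : In r Pi -> In b (rbody r) -> In (apred b) (prog_preds Pi).
Proof. intros Hr Hb. apply in_flat_map. exists r. simpl; auto using in_map. Qed.

Lemma is_update_nil tin : is_update tin [].
Proof. split; [constructor | intros f []]. Qed.

Lemma is_update_app tin U1 U2 :
  is_update tin U1 -> is_update tin U2 -> is_update tin (U1 ++ U2).
Proof.
  intros [HD1 HT1] [HD2 HT2]. split; [apply Forall_app; auto|].
  intros f Hf. apply in_app_or in Hf as [Hf|Hf]; auto.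
Qed.

Lemma is_update_fact tin P os z :
  is_temporal P = true -> pidb P = false -> length os = arity P - 1 -> (tin < z)%Z ->
  is_update tin [Atom P (map OConst os ++ [TConst z])].
Proof.
  intros Ht Hp Hl Hz. split.
  - repeat constructor; simpl; auto.
    + rewrite psig_temporal, map_app, map_map, <- Hl by exact Ht.
      f_equal. exact (map_const SObj os).
    + rewrite Ht, orb_true_r. reflexivity.
    + apply Forall_app. split; [|repeat constructor].
      apply Forall_forall. intros t Ht'. apply in_map_iff in Ht' as (o & <- & _). exact I.
  - intros f [<-|[]]. split; [exact Ht|]. exists z. split; [apply last_last | exact Hz].
Qed.

Lemma map_nth_seq {T : Type} (d : T) (l : list T) :
  map (fun i => nth i l d) (seq 0 (length l)) = l.
Proof.
  induction l as [|x l IH]; [reflexivity|]. simpl. f_equal.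
  rewrite <- seq_shift, map_map. exact IH.
Qed.

Lemma ground_eval_ovars ov tv n s :
  map (ground_eval ov tv) (ovars n ++ [s]) =
  map inl (map ov (seq 0 n)) ++ [ground_eval ov tv s].
Proof. unfold ovars. rewrite map_app, !map_map. reflexivity. Qed.

Section CriticalProgram.

Variables (Q : query) (A V : pred) (psi : pred -> pred).

Local Notation CP := (critical_program Q A V psi).
Local Notation tedb := (tedb_preds (qprog Q)).

Definition copy_rule (P : pred) : rule :=
  Rule [Atom P (ovars (arity P - 1) ++ [TVar 0])]
       (Atom (psi P) (ovars (arity P - 1) ++ [TVar 0])).

Definition propagate_rule (P : pred) : rule :=
  Rule [Atom V [TShift 0 1]; Atom (psi P) (ovars (arity P - 1) ++ [TVar 0])]
       (Atom (psi P) (ovars (arity P - 1) ++ [TShift 0 1])).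

Lemma critical_program_cases r :
  In r CP ->
  (exists r0, In r0 (qprog Q) /\ r = ren_rule psi r0) \/
  r = Rule [Atom A [TVar 0]] (Atom V [TVar 0]) \/
  r = Rule [Atom V [TVar 0]] (Atom V [TShift 0 1]) \/
  (exists P, In P tedb /\ (r = copy_rule P \/ r = propagate_rule P)).
Proof.
  unfold critical_program. intro Hr. apply in_app_or in Hr as [Hr|[<-|[<-|Hr]]]; auto.
  - left. apply in_map_iff in Hr as (r0 & <- & Hr0). eauto.
  - do 3 right. apply in_flat_map in Hr as (P & HP & [<-|[<-|[]]]); eauto.
Qed.

Lemma ren_rule_in_critical r : In r (qprog Q) -> In (ren_rule psi r) CP.
Proof. intro Hr. apply in_or_app. left. apply in_map, Hr. Qed.

Lemma copy_rules_in_critical P :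
  In P tedb -> In (copy_rule P) CP /\ In (propagate_rule P) CP.
Proof.
  intro HP. split; apply in_or_app; do 3 right; apply in_flat_map; exists P;
    simpl; auto.
Qed.

Lemma ren_pred_tedb R : In R tedb -> ren_pred psi R = psi R.
Proof. intro HR. apply filter_In in HR as [_ Ht]. unfold ren_pred. rewrite Ht. reflexivity. Qed.

Variable F : dataset.

Lemma derives_copy P os z :
  In P tedb -> length os = arity P - 1 ->
  derives CP F P (map inl os ++ [inr z]) -> derives CP F (psi P) (map inl os ++ [inr z]).
Proof.
  intros HP Hl H.
  apply (derives_rule_eq _ _ (copy_rule P) (fun i => nth i os 0) (fun _ => z)).
  - apply copy_rules_in_critical, HP.
  - intros b [<-|[]]. simpl. rewrite <- Hl, ground_eval_ovars, map_nth_seq. exact H.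
  - reflexivity.
  - simpl. rewrite <- Hl, ground_eval_ovars, map_nth_seq. reflexivity.
Qed.

Lemma derives_propagate P os z :
  In P tedb -> length os = arity P - 1 -> derives CP F V [inr (z + 1)%Z] ->
  derives CP F (psi P) (map inl os ++ [inr z]) ->
  derives CP F (psi P) (map inl os ++ [inr (z + 1)%Z]).
Proof.
  intros HP Hl HV H.
  apply (derives_rule_eq _ _ (propagate_rule P) (fun i => nth i os 0) (fun _ => z)).
  - apply copy_rules_in_critical, HP.
  - intros b [<-|[<-|[]]]; simpl; [exact HV|].
    rewrite <- Hl, ground_eval_ovars, map_nth_seq. exact H.
  - reflexivity.
  - simpl. rewrite <- Hl, ground_eval_ovars, map_nth_seq. reflexivity.
Qed.

Lemma derives_V_of_A z : derives CP F A [inr z] -> derives CP F V [inr z].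
Proof.
  intro H. apply (derives_rule_eq _ _ (Rule [Atom A [TVar 0]] (Atom V [TVar 0]))
                    (fun _ => 0) (fun _ => z)); try reflexivity.
  - apply in_or_app. simpl. auto.
  - intros b [<-|[]]. exact H.
Qed.

Lemma derives_V_le z z' :
  (z <= z')%Z -> derives CP F V [inr z] -> derives CP F V [inr z'].
Proof.
  intros Hz H. revert z' Hz. apply Z.le_ind; [intros ? ? ->; reflexivity | exact H |].
  intros m _ Hm.
  apply (derives_rule_eq _ _ (Rule [Atom V [TVar 0]] (Atom V [TShift 0 1]))
           (fun _ => 0) (fun _ => m)); try reflexivity.
  - apply in_or_app. simpl. auto.
  - intros b [<-|[]]. exact Hm.
Qed.

Lemma derives_copy_persists P os z z' :
  In P tedb -> length os = arity P - 1 -> derives CP F V [inr z] -> (z <= z')%Z ->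
  derives CP F (psi P) (map inl os ++ [inr z]) ->
  derives CP F (psi P) (map inl os ++ [inr z']).
Proof.
  intros HP Hl HV Hz H. revert z' Hz. apply Z.le_ind; [intros ? ? ->; reflexivity | exact H |].
  intros m Hm IH. apply derives_propagate; auto.
  apply (derives_V_le z); [lia | exact HV].
Qed.

End CriticalProgram.

(** * From the critical query back to updates *)

Section Unrenaming.

Variables (Q : query) (D : dataset) (tin : Z) (oI : nat) (A V : pred) (psi : pred -> pred)
  (UI : dataset).
Hypothesis Hpreds : critical_preds Q D A V psi.
Hypothesis HUI : is_critical_update Q D tin oI A UI.

Local Notation CP := (critical_program Q A V psi).
Local Notation tedb := (tedb_preds (qprog Q)).

Definition ordinary (P : pred) : Prop :=
  P <> A /\ P <> V /\ forall R, In R tedb -> P <> psi R.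

Lemma prog_pred_ordinary P : In P (prog_preds (qprog Q)) -> ordinary P.
Proof.
  destruct Hpreds as ((_ & _ & HA & _) & (_ & _ & HV & _) & _ & Hpsi & _).
  intro HP. repeat split; [| | intros R HR]; intros ->; [exact (HA HP) | exact (HV HP) |].
  destruct (Hpsi R HR) as (_ & _ & [Hfresh _] & _). exact (Hfresh HP).
Qed.

Lemma data_pred_ordinary e : In e D -> ordinary (apred e).
Proof.
  destruct Hpreds as ((_ & _ & _ & HA) & (_ & _ & _ & HV) & _ & Hpsi & _).
  intro He. apply (in_map apred) in He. repeat split; [| | intros R HR];
    intro Heq; rewrite Heq in He; [exact (HA He) | exact (HV He) |].
  destruct (Hpsi R HR) as (_ & _ & [_ Hfresh] & _). exact (Hfresh He).
Qed.

Lemma psi_not_A_V R : In R tedb -> psi R <> A /\ psi R <> V.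
Proof.
  destruct Hpreds as (_ & _ & _ & Hpsi & _). intro HR.
  destruct (Hpsi R HR) as (_ & _ & _ & HA & HV). auto.
Qed.

Definition update_derivable (X : dataset) (P : pred) (vals : list (nat + Z)) : Prop :=
  exists U, is_update tin U /\ (X = [] -> U = []) /\ derives (qprog Q) (D ++ U) P vals.

Lemma update_derivable_merge {T : Type} X (p : T -> pred) (v : T -> list (nat + Z)) l :
  (forall b, In b l -> update_derivable X (p b) (v b)) ->
  exists U, is_update tin U /\ (X = [] -> U = []) /\
    forall b, In b l -> derives (qprog Q) (D ++ U) (p b) (v b).
Proof.
  induction l as [|b0 l IH]; intro Hl.
  - exists []. split; [apply is_update_nil | split; [auto | intros b []]].
  - destruct (Hl b0 (or_introl eq_refl)) as (U1 & Hu1 & Hx1 & Hd1).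
    destruct IH as (U2 & Hu2 & Hx2 & Hd2); [intros b Hb; apply Hl; right; exact Hb|].
    exists (U1 ++ U2). split; [apply is_update_app; auto|]. split.
    + intro Hx. rewrite Hx1, Hx2; auto.
    + intros b [<-|Hb]; eapply derives_mono; try eassumption; auto;
        apply incl_app_app; auto using incl_refl, incl_appl, incl_appr.
Qed.

(* What a fact derived by the critical program from [D ++ X], [X] a part of [U_I], says about
   [Q]: [A] and [V] only hold after [tin], and [psi R] and the predicates of [Pi_Q] only where
   they are derivable after some update, which can be taken empty when [X] is. *)
Record unrenamed (X : dataset) (P : pred) (vals : list (nat + Z)) : Prop := {
  unrenamed_A : P = A -> X <> [] /\ vals = [inr (tin + 1)%Z];
  unrenamed_V : P = V -> X <> [] /\ exists z, vals = [inr z] /\ (tin + 1 <= z)%Z;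
  unrenamed_psi : forall R, In R tedb -> P = psi R -> update_derivable X R vals;
  unrenamed_ordinary : ordinary P -> update_derivable X P vals }.

Lemma unrenamed_ren X P vals :
  In P (prog_preds (qprog Q)) ->
  update_derivable X P vals <-> unrenamed X (ren_pred psi P) vals.
Proof.
  intro HP. pose proof (prog_pred_ordinary P HP) as (HA & HV & Hpsi).
  unfold ren_pred. destruct (is_temporal_edb P) eqn:Ht.
  - assert (HR : In P tedb) by (apply filter_In; auto).
    destruct (psi_not_A_V P HR) as [HpA HpV]. split.
    + intro H. split; try contradiction.
      * intros R HR' Heq. destruct Hpreds as (_ & _ & _ & _ & Hinj).
        rewrite (Hinj R P HR' HR (eq_sym Heq)). exact H.
      * intros (_ & _ & Hord). exfalso. exact (Hord P HR eq_refl).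
    + intros H. exact (unrenamed_psi _ _ _ H P HR eq_refl).
  - split.
    + intro H. split; try contradiction; auto.
      intros R HR Heq. exfalso. exact (Hpsi R HR Heq).
    + intro H. apply (unrenamed_ordinary _ _ _ H). repeat split; auto.
Qed.

Lemma unrenamed_of_ordinary X P vals :
  ordinary P -> update_derivable X P vals -> unrenamed X P vals.
Proof.
  intros (HA & HV & Hpsi) H. split; auto; try contradiction.
  intros R HR Heq. exfalso. exact (Hpsi R HR Heq).
Qed.

Lemma unrenamed_fact X e ov tv :
  incl X UI -> In e (D ++ X) -> unrenamed X (apred e) (map (ground_eval ov tv) (aargs e)).
Proof.
  intros HX He. apply in_app_or in He as [He|He].
  - apply unrenamed_of_ordinary; [exact (data_pred_ordinary e He)|].
    exists []. split; [apply is_update_nil|]. split; [auto|].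
    rewrite app_nil_r. apply derives_fact, He.
  - assert (HXn : X <> []) by (intros ->; destruct He).
    destruct (proj1 (HUI e) (HX e He)) as [-> | (P & os & HP & Hl & _ & ->)].
    + pose proof Hpreds as (_ & _ & HAV & _).
      split; simpl; auto; try contradiction.
      * intros R HR Heq. exfalso. exact (proj1 (psi_not_A_V R HR) (eq_sym Heq)).
      * intros (HA & _). contradiction.
    + apply tedb_predsP in HP as (HP & Ht & Hidb). simpl. rewrite ground_eval_const.
      apply unrenamed_of_ordinary; [exact (prog_pred_ordinary P HP)|].
      set (f := Atom P (map OConst os ++ [TConst (tin + 1)])).
      exists [f]. split; [apply is_update_fact; auto; lia | split; [contradiction|]].
      apply (derives_fact_eq _ _ f ov tv); [apply in_or_app; simpl; auto | reflexivity |].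
      simpl. rewrite ground_eval_const. reflexivity.
Qed.

Lemma unrenamed_V_after X z : X <> [] -> (tin + 1 <= z)%Z -> unrenamed X V [inr z].
Proof.
  intros HX Hz. pose proof Hpreds as (_ & _ & HAV & _). split; eauto.
  - intro HVA. contradiction (HAV (eq_sym HVA)).
  - intros R HR HVR. contradiction (proj2 (psi_not_A_V R HR) (eq_sym HVR)).
  - intros (_ & HV & _). contradiction.
Qed.

Lemma unrenamed_ren_rule X r ov tv :
  In r (qprog Q) ->
  (forall b, In b (rbody r) ->
     unrenamed X (ren_pred psi (apred b)) (map (ground_eval ov tv) (aargs b))) ->
  unrenamed X (ren_pred psi (apred (rhead r))) (map (ground_eval ov tv) (aargs (rhead r))).
Proof.
  intros Hr Hbody. apply unrenamed_ren; [apply prog_preds_head, Hr|].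
  destruct (update_derivable_merge X apred (fun b => map (ground_eval ov tv) (aargs b))
              (rbody r)) as (U & HU & HXU & Hder).
  { intros b Hb. apply (unrenamed_ren X); [apply (prog_preds_body _ r); auto | auto]. }
  exists U. split; [exact HU | split; [exact HXU | apply derives_rule; auto]].
Qed.

Lemma unrenamed_propagate X P os z :
  In P tedb -> length os = arity P - 1 -> unrenamed X V [inr (z + 1)%Z] ->
  unrenamed X (psi P) (map inl os ++ [inr z]) ->
  unrenamed X (psi P) (map inl os ++ [inr (z + 1)%Z]).
Proof.
  intros HP Hl HV Hpsi.
  destruct (unrenamed_V _ _ _ HV eq_refl) as (HX & z' & Hz' & Hle). injection Hz' as <-.
  destruct (unrenamed_psi _ _ _ Hpsi P HP eq_refl) as (U & HU & _ & Hder).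
  pose proof HP as (HPp & Ht & Hidb)%tedb_predsP.
  rewrite <- (ren_pred_tedb Q) by exact HP. apply unrenamed_ren; [exact HPp|].
  set (f := Atom P (map OConst os ++ [TConst (z + 1)])).
  exists (U ++ [f]). split; [apply is_update_app, is_update_fact; auto; lia|].
  split; [contradiction|].
  apply (derives_fact_eq _ _ f (fun _ => 0) (fun _ => 0%Z));
    [apply in_or_app; right; apply in_or_app; simpl; auto | reflexivity |].
  simpl. rewrite ground_eval_const. reflexivity.
Qed.

Lemma unrenamed_of_derives X P vals :
  incl X UI -> derives CP (D ++ X) P vals -> unrenamed X P vals.
Proof.
  intros HX H. induction H as [e ov tv He | r ov tv Hr _ IH].
  { apply unrenamed_fact; assumption. }
  destruct (critical_program_cases _ _ _ _ _ Hr)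
    as [(r0 & Hr0 & ->) | [-> | [-> | (P & HP & [-> | ->])]]]; simpl in IH |- *.
  - apply unrenamed_ren_rule; [exact Hr0|].
    intros b Hb. apply (IH (ren_atom psi b)), in_map, Hb.
  - destruct (unrenamed_A _ _ _ (IH _ (or_introl eq_refl)) eq_refl) as [HXn Hz].
    injection Hz as ->. apply unrenamed_V_after; [exact HXn | lia].
  - destruct (unrenamed_V _ _ _ (IH _ (or_introl eq_refl)) eq_refl) as (HXn & z & Hz & Hle).
    injection Hz as ->. apply unrenamed_V_after; [exact HXn | lia].
  - pose proof HP as (HPp & _)%tedb_predsP.
    rewrite <- (ren_pred_tedb Q) by exact HP. apply unrenamed_ren; [exact HPp|].
    apply (unrenamed_ordinary _ _ _ (IH _ (or_introl eq_refl)) (prog_pred_ordinary P HPp)).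
  - pose proof (IH _ (or_intror (or_introl eq_refl))) as IHpsi. simpl in IHpsi.
    rewrite ground_eval_ovars in IHpsi |- *. simpl in IHpsi |- *.
    apply unrenamed_propagate; [exact HP | now rewrite length_map, length_seq | |].
    + exact (IH _ (or_introl eq_refl)).
    + exact IHpsi.
Qed.

End Unrenaming.

(** * From updates to the critical query *)

Definition map_obj (f : nat -> nat) (v : nat + Z) : nat + Z :=
  match v with inl o => inl (f o) | inr z => inr z end.

Lemma map_obj_const f os z :
  map (map_obj f) (map inl os ++ [inr z]) = map inl (map f os) ++ [inr z].
Proof. rewrite map_app, !map_map. reflexivity. Qed.

Lemma ground_eval_map_obj f ov tv args :
  (forall o, In (OConst o) args -> f o = o) ->
  map (ground_eval (fun x => f (ov x)) tv) args =
  map (map_obj f) (map (ground_eval ov tv) args).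
Proof.
  induction args as [|t args IH]; intro Hf; [reflexivity|]. simpl. f_equal.
  - destruct t; simpl; try reflexivity. rewrite Hf; simpl; auto.
  - apply IH. intros o Ho. apply Hf. simpl; auto.
Qed.

Lemma derives_rename (Pi Pi' : program) psi f E F :
  (forall r, In r Pi -> In (ren_rule psi r) Pi') ->
  (forall o, obj_in_prog o Pi -> f o = o) ->
  (forall e ov tv, In e E -> In (apred e) (prog_preds Pi) ->
     derives Pi' F (ren_pred psi (apred e))
       (map (map_obj f) (map (ground_eval ov tv) (aargs e)))) ->
  forall P vals, derives Pi E P vals -> In P (prog_preds Pi) ->
  derives Pi' F (ren_pred psi P) (map (map_obj f) vals).
Proof.
  intros HPi' Hf Hbase P vals H. induction H as [e ov tv He | r ov tv Hr _ IH]; intro HP.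
  { apply Hbase; assumption. }
  assert (Hfix : forall a, In a (rhead r :: rbody r) ->
                 forall o, In (OConst o) (aargs a) -> f o = o)
    by (intros a Ha o Ho; apply Hf; exists r; split; [exact Hr | exists a; auto]).
  apply (derives_rule_eq _ _ (ren_rule psi r) (fun x => f (ov x)) tv); auto; simpl.
  - intros b' (b & <- & Hb)%in_map_iff. simpl.
    rewrite (ground_eval_map_obj f ov tv) by (apply Hfix; simpl; auto).
    apply IH; [exact Hb | apply (prog_preds_body _ r); assumption].
  - rewrite (ground_eval_map_obj f ov tv) by (apply Hfix; simpl; auto). reflexivity.
Qed.

Section CriticalBase.

Variables (Q : query) (D : dataset) (A V : pred) (psi : pred -> pred).
Hypothesis HD : is_dataset D.

Local Notation CP := (critical_program Q A V psi).

Lemma derives_critical_data f F e ov tv :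
  (forall o, obj_in_data o D -> f o = o) -> incl D F -> In e D ->
  In (apred e) (prog_preds (qprog Q)) ->
  derives CP F (ren_pred psi (apred e))
    (map (map_obj f) (map (ground_eval ov tv) (aargs e))).
Proof.
  intros Hf HF He HP.
  pose proof (proj1 (Forall_forall _ _) HD e He) as [Hfact Hidb].
  rewrite <- ground_eval_map_obj by (intros o Ho; apply Hf; exists e; auto).
  unfold ren_pred. destruct (is_temporal_edb (apred e)) eqn:Ht.
  - assert (HR : In (apred e) (tedb_preds (qprog Q))) by (apply filter_In; auto).
    pose proof HR as (_ & Htemp & _)%tedb_predsP.
    destruct (temporal_fact_shape e Hfact Htemp) as (os & z & Hargs & Hl).
    rewrite Hargs, ground_eval_const. apply derives_copy; [exact HR | exact Hl|].
    apply (derives_fact_eq _ _ e (fun x => f (ov x)) tv); auto.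
    rewrite Hargs, ground_eval_const. reflexivity.
  - apply derives_fact, HF, He.
Qed.

Variables (tin : Z) (oI : nat) (UI : dataset).
Hypothesis HUI : is_critical_update Q D tin oI A UI.

Lemma derives_critical_update U f e ov tv :
  is_update tin U -> (forall o, in_crit_dom Q D oI (f o)) -> In e U ->
  In (apred e) (prog_preds (qprog Q)) ->
  derives CP (D ++ UI) (ren_pred psi (apred e))
    (map (map_obj f) (map (ground_eval ov tv) (aargs e))).
Proof.
  intros [HUd HUt] Hf He HP.
  pose proof (proj1 (Forall_forall _ _) HUd e He) as [Hfact Hidb].
  destruct (HUt e He) as [Ht (z' & Hlast & Hz')].
  assert (HR : In (apred e) (tedb_preds (qprog Q))) by (apply tedb_predsP; auto).
  rewrite (ren_pred_tedb Q) by exact HR.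
  destruct (temporal_fact_shape e Hfact Ht) as (os & z & Hargs & Hl).
  rewrite Hargs, last_last in Hlast. injection Hlast as <-.
  rewrite Hargs, ground_eval_const, map_obj_const.
  assert (Hlf : length (map f os) = arity (apred e) - 1) by (rewrite length_map; exact Hl).
  assert (HAI : In (Atom A [TConst (tin + 1)]) (D ++ UI))
    by (apply in_or_app; right; apply HUI; auto).
  assert (HeI : In (Atom (apred e) (map OConst (map f os) ++ [TConst (tin + 1)])) (D ++ UI)).
  { apply in_or_app. right. apply HUI. right. exists (apred e), (map f os).
    repeat split; auto. apply Forall_forall. intros o (o' & <- & _)%in_map_iff. apply Hf. }
  apply (derives_copy_persists _ _ _ _ _ _ _ (tin + 1)); auto; [| lia |].
  - apply derives_V_of_A.
    apply (derives_fact_eq _ _ _ (fun _ => 0) (fun _ => 0%Z) _ _ HAI); reflexivity.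
  - apply derives_copy; auto.
    apply (derives_fact_eq _ _ _ (fun _ => 0) (fun _ => 0%Z) _ _ HeI); [reflexivity|].
    simpl. rewrite ground_eval_const. reflexivity.
Qed.

End CriticalBase.

(** * Objects outside the critical domain *)

(* Range restriction: every object variable of a head also occurs in the body. *)
Lemma derives_obj_origin Pi E P vals o :
  program_wf Pi -> is_dataset E -> derives Pi E P vals -> In (inl o) vals ->
  obj_in_prog o Pi \/ obj_in_data o E.
Proof.
  intros Hwf HE H. revert o. induction H as [e ov tv He | r ov tv Hr _ IH]; intros o Ho;
    apply in_map_iff in Ho as (t & Ht & Hin).
  - pose proof (proj1 (Forall_forall _ _) HE e He) as [[_ Hc] _].
    pose proof (proj1 (Forall_forall _ _) Hc t Hin) as Htc.
    destruct t; simpl in Ht; try contradiction; try discriminate.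
    injection Ht as ->. right. exists e. auto.
  - destruct t as [o'|x| | |]; simpl in Ht; try discriminate; injection Ht as <-.
    + left. exists r. split; [exact Hr|]. exists (rhead r). simpl; auto.
    + pose proof (proj1 (Forall_forall _ _) Hwf r Hr) as (_ & _ & Hsafe).
      destruct (Hsafe (SObj, x)) as (b & Hb & Hbx);
        [apply in_flat_map; exists (OVar x); simpl; auto|].
      apply in_flat_map in Hbx as ([] & Htb & Hx); simpl in Hx; try contradiction;
        destruct Hx as [Hx|[]]; try discriminate. injection Hx as ->.
      apply (IH b Hb). apply in_map_iff. exists (OVar x). auto.
Qed.

Definition collapse (Q : query) (D : dataset) (oI : nat) (o : nat) : nat :=
  if excluded_middle_informative (in_crit_dom Q D oI o) then o else oI.

Lemma collapse_in_crit_dom Q D oI o : in_crit_dom Q D oI (collapse Q D oI o).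
Proof. unfold collapse. destruct excluded_middle_informative; auto. right; right; auto. Qed.

Lemma collapse_id Q D oI o : in_crit_dom Q D oI o -> collapse Q D oI o = o.
Proof. unfold collapse. destruct excluded_middle_informative; tauto. Qed.

Section CriticalQuery.

Variables (Q : query) (D : dataset) (tin : Z) (oI : nat) (A V : pred) (psi : pred -> pred)
  (UI : dataset).
Hypothesis Hwf : program_wf (qprog Q).
Hypothesis Hidb : pidb (qpred Q) = true.
Hypothesis Hqp : In (qpred Q) (prog_preds (qprog Q)).
Hypothesis HD : is_dataset D.
Hypothesis HoI : fresh_obj Q D oI.
Hypothesis Hpreds : critical_preds Q D A V psi.
Hypothesis HUI : is_critical_update Q D tin oI A UI.

Local Notation CP := (critical_program Q A V psi).

Lemma ren_pred_qpred : ren_pred psi (qpred Q) = qpred Q.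
Proof. unfold ren_pred, is_temporal_edb. rewrite Hidb, andb_false_r. reflexivity. Qed.

Lemma update_derivable_of_critical X vals :
  incl X UI -> derives CP (D ++ X) (qpred Q) vals ->
  update_derivable Q D tin X (qpred Q) vals.
Proof.
  intros HX H. apply (unrenamed_ren Q D tin A V psi Hpreds); [exact Hqp|].
  rewrite ren_pred_qpred. apply (unrenamed_of_derives Q D tin oI A V psi UI); assumption.
Qed.

Lemma derives_critical_of_data vals :
  derives (qprog Q) D (qpred Q) vals -> derives CP D (qpred Q) vals.
Proof.
  intro H. assert (Hid : map (map_obj id) vals = vals).
  { rewrite <- (map_id vals) at 2. apply map_ext. intros []; reflexivity. }
  rewrite <- ren_pred_qpred, <- Hid.
  apply (derives_rename (qprog Q) CP psi id D D); auto using ren_rule_in_critical.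
  intros e ov tv He HP. apply (derives_critical_data Q D); auto using incl_refl.
Qed.

Lemma derives_critical_of_update U vals :
  is_update tin U -> derives (qprog Q) (D ++ U) (qpred Q) vals ->
  derives CP (D ++ UI) (qpred Q) (map (map_obj (collapse Q D oI)) vals).
Proof.
  intros HU H. rewrite <- ren_pred_qpred.
  apply (derives_rename (qprog Q) CP psi _ (D ++ U)); auto using ren_rule_in_critical.
  - intros o Ho. apply collapse_id. left. exact Ho.
  - intros e ov tv [He|He]%in_app_or HP.
    + apply (derives_critical_data Q D); auto using incl_appl, incl_refl.
      intros o Ho. apply collapse_id. right; left. exact Ho.
    + eapply derives_critical_update; eauto using collapse_in_crit_dom.
Qed.

Lemma collapse_answer_id os tau :
  derives (qprog Q) D (qpred Q) (map inl (map (collapse Q D oI) os) ++ [inr tau]) ->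
  map (collapse Q D oI) os = os.
Proof.
  intro H. rewrite <- (map_id os) at 2. apply map_ext_in. intros o Ho.
  assert (Horig : obj_in_prog (collapse Q D oI o) (qprog Q) \/ obj_in_data (collapse Q D oI o) D).
  { apply (derives_obj_origin _ _ _ _ _ Hwf HD H), in_or_app. left. apply in_map, in_map, Ho. }
  unfold collapse in *. destruct excluded_middle_informative; [reflexivity|].
  destruct HoI, Horig; contradiction.
Qed.

Local Notation CQ := (critical_query Q A V psi).

Lemma critical_answers_reflected_of_dtp tout :
  dtp_holds Q D tin tout ->
  forall os, answer CQ (D ++ UI) tout os -> answer CQ D tout os.
Proof.
  intros Hdtp os [Hl Hder]%answer_iff_derives.
  destruct (update_derivable_of_critical UI _ (incl_refl UI) Hder) as (U & HU & _ & HderU).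
  apply answer_iff_derives. split; [exact Hl|]. apply derives_critical_of_data.
  apply (answer_iff_derives Q), (Hdtp U HU os), answer_iff_derives. auto.
Qed.

Lemma dtp_of_critical_answers_reflected tout :
  (forall os, length os = arity (qpred Q) - 1 -> Forall (in_crit_dom Q D oI) os ->
     answer CQ (D ++ UI) tout os -> answer CQ D tout os) ->
  dtp_holds Q D tin tout.
Proof.
  intros Hcrit U HU os. rewrite !answer_iff_derives.
  split; intros [Hl Hder]; split; try exact Hl.
  { eapply derives_mono; [apply incl_appl, incl_refl | exact Hder]. }
  set (h := collapse Q D oI).
  assert (HansI : answer CQ (D ++ UI) tout (map h os)).
  { apply answer_iff_derives. split; [rewrite length_map; exact Hl|]. simpl.
    rewrite <- map_obj_const. apply derives_critical_of_update with U; assumption. }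
  apply Hcrit, answer_iff_derives in HansI as [_ HderD];
    [| rewrite length_map; exact Hl
     | apply Forall_forall; intros o (o' & <- & _)%in_map_iff; apply collapse_in_crit_dom].
  simpl in HderD. rewrite <- (app_nil_r D) in HderD.
  destruct (update_derivable_of_critical [] _ (incl_nil_l _) HderD) as (U' & _ & HU' & HderQ).
  rewrite (HU' eq_refl), app_nil_r in HderQ.
  rewrite <- (collapse_answer_id os tout HderQ). exact HderQ.
Qed.

End CriticalQuery.

Theorem lemma2 (Q : query) (D : dataset) (tin tout : Z)
  (HI : dtp_instance Q D tin tout)
  (oI : nat) (HoI : fresh_obj Q D oI)
  (A V : pred) (psi : pred -> pred) (Hpreds : critical_preds Q D A V psi)
  (UI : dataset) (HUI : is_critical_update Q D tin oI A UI) :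
  dtp_holds Q D tin tout <->
  (forall os : list nat,
     length os = arity (qpred Q) - 1 ->
     Forall (in_crit_dom Q D oI) os ->
     answer (critical_query Q A V psi) (D ++ UI) tout os ->
     answer (critical_query Q A V psi) D tout os).
Proof.
  destruct HI as [[[Hwf [Hidb Hqp]] _] [[HD _] _]].
  split.
  - intros Hdtp os _ _. eapply critical_answers_reflected_of_dtp; eassumption.
  - intro Hcrit. eapply dtp_of_critical_answers_reflected; eassumption.
Qed.
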